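(* Let $\mathcal{X}\in\mathbb{K}_l^{m\times n}$ and $\mathcal{Y}\in\mathbb{K}_l^{n\times p}$ be fixed tubal matrices, let $\tau\ge 1$, and let $\mathcal{S}\in\mathbb{K}_l^{n\times\tau}$, $\mathcal{D}\in\mathbb{K}_l^{\tau\times\tau}$ be the random sampling and rescaling tubal matrices generated from a probability distribution $\{\pi_i\}_{i=1}^n$ (with $\pi_i>0$) as described in the context. Suppose that for some $\beta\in(0,1]$ either $$\pi_i\ \ge\ \beta\,\frac{\|\mathcal{X}_{(:,i,:)}\|_F\,\|\mathcal{Y}_{(i,:,:)}\|_F}{\sum_{j=1}^n\|\mathcal{X}_{(:,j,:)}\|_F\,\|\mathcal{Y}_{(j,:,:)}\|_F}\quad\text{for all } i\in[n],$$ or $$\pi_i\ \ge\ \beta\,\frac{\|\mathcal{X}_{(:,i,:)}\|_F^2}{\|\mathcal{X}\|_F^2}\quad\text{for all } i\in[n].$$ Then $$\mathbf{E}\big[\|\mathcal{X}*\mathcal{Y}-\mathcal{X}*\mathcal{S}*\mathcal{D}*\mathcal{D}*\mathcal{S}^{T}*\mathcal{Y}\|_F^2\big]\ \le\ \frac{l}{\beta\tau}\,\|\mathcal{X}\|_F^2\,\|\mathcal{Y}\|_F^2 .$$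
   Context: $\mathbb{K}_l^{n\times p}$ denotes $\mathbb{R}^{n\times p\times l}$ (third-order tensors, called tubal matrices); $\mathcal{X}_{(k)}=\mathcal{X}_{(:,:,k)}$ is the $k$-th frontal slice, and Matlab-style indexing is used for fibers and slices (e.g. $\mathcal{X}_{(:,i,:)}$ is the $i$-th lateral slice, $\mathcal{Y}_{(i,:,:)}$ the $i$-th horizontal slice). The t-product of $\mathcal{A}\in\mathbb{K}_l^{n\times p}$ and $\mathcal{B}\in\mathbb{K}_l^{p\times r}$ is $\mathcal{A}*\mathcal{B}=\mathrm{fold}(\mathrm{bcirc}(\mathcal{A})\,\mathrm{unfold}(\mathcal{B}))\in\mathbb{K}_l^{n\times r}$, where $\mathrm{bcirc}(\mathcal{A})$ is the $nl\times pl$ block-circulant matrix whose first block column is $(\mathcal{A}_{(1)};\mathcal{A}_{(2)};\dots;\mathcal{A}_{(l)})$ (block $(i,j)$ equals $\mathcal{A}_{((i-j \bmod l)+1)}$), $\mathrm{unfold}(\mathcal{B})=(\mathcal{B}_{(1)};\dots;\mathcal{B}_{(l)})$ stacked vertically, and $\mathrm{fold}$ inverts $\mathrm{unfold}$. The transpose $\mathcal{A}^T\in\mathbb{K}_l^{p\times n}$ has $(\mathcal{A}^T)_{(1)}=\mathcal{A}_{(1)}^T$ and $(\mathcal{A}^T)_{(k)}=\mathcal{A}_{(l-k+2)}^T$ for $k=2,\dots,l$. $\|\cdot\|_F$ is the square root of the sum of squares of all entries. Sampling construction: given a probability distribution $\{\pi_i\}_{i=1}^n$ on $[n]=\{1,\dots,n\}$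 and an integer $\tau$, draw indices $i_1,\dots,i_\tau\in[n]$ independently with $\mathbf{P}(i_t=i)=\pi_i$ (sampling with replacement); $\mathcal{S}\in\mathbb{K}_l^{n\times\tau}$ has $\mathcal{S}_{(i_t,t,1)}=1$ for $t=1,\dots,\tau$ and all other entries zero; $\mathcal{D}\in\mathbb{K}_l^{\tau\times\tau}$ has $\mathcal{D}_{(t,t,1)}=1/\sqrt{\tau\pi_{i_t}}$ for $t=1,\dots,\tau$ and all other entries zero. *)

From HB Require Import structures.
From mathcomp Require Import all_boot all_order all_algebra.
From mathcomp Require Import reals.
Set Implicit Arguments. Unset Strict Implicit. Unset Printing Implicit Defensive.
Import Order.TTheory GRing.Theory Num.Theory.
Local Open Scope ring_scope.

(* A tubal matrix in K_l^{m x n} = R^{m x n x l}, given by its l frontal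
   slices: X k = X_(:,:,k+1)  (0-based slice index k : 'I_l). *)
Definition tubal (R : Type) (l m n : nat) := 'I_l -> 'M[R]_(m, n).

Lemma ord_pos l (k : 'I_l) : (0 < l)%N.
Proof. exact: leq_ltn_trans (leq0n k) (ltn_ord k). Qed.

Definition ord_subm l (k j : 'I_l) : 'I_l :=
  Ordinal (ltn_pmod (k + l - j) (ord_pos k)).

Definition ord_negm l (k : 'I_l) : 'I_l :=
  Ordinal (ltn_pmod (l - k) (ord_pos k)).

Section Tubal.
Variable R : realType.

(* t-product: fold(bcirc(A) unfold(B)); block (i,j) of bcirc(A) is
   A_((i-j mod l)+1), so the k-th frontal slice of the result is
   sum_j A_((k-j) mod l) B_j. *)
Definition tprod l n p r (A : tubal R l n p) (B : tubal R l p r) : tubal R l n r :=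
  fun k => \sum_(j < l) (A (ord_subm k j) *m B j).

(* transpose: (A^T)_(1) = A_(1)^T, (A^T)_(k) = A_(l-k+2)^T (1-based). *)
Definition ttr l n p (A : tubal R l n p) : tubal R l p n :=
  fun k => (A (ord_negm k))^T.

Definition tsub l n p (A B : tubal R l n p) : tubal R l n p :=
  fun k => A k - B k.

Definition frob2 l n p (A : tubal R l n p) : R :=
  \sum_(k < l) \sum_(i < n) \sum_(j < p) (A k i j) ^+ 2.
Definition frob l n p (A : tubal R l n p) : R := Num.sqrt (frob2 A).

Definition lat_slice l m n (X : tubal R l m n) (i : 'I_n) : tubal R l m 1 :=
  fun k => col i (X k).
Definition hor_slice l n p (Y : tubal R l n p) (i : 'I_n) : tubal R l 1 p :=
  fun k => row i (Y k).

Definition is_first l (k : 'I_l) : bool := (k == 0 :> nat).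

Definition sampS l n tau (idx : {ffun 'I_tau -> 'I_n}) : tubal R l n tau :=
  fun k => \matrix_(i < n, t < tau)
             (if is_first k && (i == idx t) then 1 else 0).

Definition sampD l n tau (pi : 'I_n -> R) (idx : {ffun 'I_tau -> 'I_n})
  : tubal R l tau tau :=
  fun k => \matrix_(s < tau, t < tau)
             (if is_first k && (s == t)
              then (Num.sqrt (tau%:R * pi (idx t)))^-1 else 0).

(* expectation over i_1,...,i_tau drawn i.i.d. with P(i_t = i) = pi i *)
Definition sampE n tau (pi : 'I_n -> R) (F : {ffun 'I_tau -> 'I_n} -> R) : R :=
  \sum_(idx : {ffun 'I_tau -> 'I_n}) (\prod_(t < tau) pi (idx t)) * F idx.


End Tubal.
Arguments sampS {R l n tau} idx _.

From HB Require Import structures.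
From mathcomp Require Import all_boot all_order all_algebra.
From mathcomp Require Import reals.
From mathcomp Require Import ring lra zify.
Import Order.TTheory GRing.Theory Num.Theory.
Local Open Scope ring_scope.

(* Write A_i = X_(:,i,:) * Y_(i,:,:) for the slice products.  Then
   X * Y = sum_i A_i, while the sketch equals (1/tau) sum_t A_(i_t) / pi_(i_t).
   So each entry of the error reads  mu - (1/tau) sum_t g(i_t),  where
   g(i) = A_i(k,r,c) / pi_i and mu = sum_i pi_i g(i) is the mean of g: it is
   the deviation of a sample mean of tau i.i.d. draws, whose expected square
   is the variance over tau, at most (1/tau) sum_i A_i(k,r,c)^2 / pi_i.
   Summing over entries, E ||error||^2 <= sum_i ||A_i||^2 / (tau pi_i).
   By Cauchy-Schwarz, ||A_i||^2 <= l ||X_(:,i,:)||^2 ||Y_(i,:,:)||^2, and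
   either sampling hypothesis gives sum_i a_i b_i / pi_i <= (sum a)(sum b)/beta. *)

Section SampleExpectation.
Context {R : realType} {n tau : nat} (pi : 'I_n -> R).
Hypothesis pi_sum1 : \sum_(i < n) pi i = 1.

Lemma sampE_ext (F G : {ffun 'I_tau -> 'I_n} -> R) :
  (forall idx, F idx = G idx) -> sampE pi F = sampE pi G.
Proof. by move=> FG; apply: eq_bigr => idx _; rewrite FG. Qed.

Lemma sampE_sum (I : finType) (F : I -> {ffun 'I_tau -> 'I_n} -> R) :
  sampE pi (fun idx => \sum_(k : I) F k idx) = \sum_k sampE pi (F k).
Proof. by rewrite /sampE; under eq_bigr do rewrite mulr_sumr; exact: exchange_big. Qed.

Lemma sampE_add (F G : {ffun 'I_tau -> 'I_n} -> R) :
  sampE pi (fun idx => F idx + G idx) = sampE pi F + sampE pi G.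
Proof. by rewrite /sampE -big_split; apply: eq_bigr => idx _; rewrite mulrDr. Qed.

Lemma sampE_scale (c : R) (F : {ffun 'I_tau -> 'I_n} -> R) :
  sampE pi (fun idx => c * F idx) = c * sampE pi F.
Proof. by rewrite /sampE mulr_sumr; apply: eq_bigr => idx _; rewrite mulrCA. Qed.

Lemma sampE_const (c : R) : sampE pi (fun _ : {ffun 'I_tau -> 'I_n} => c) = c.
Proof.
rewrite /sampE -mulr_suml.
rewrite -(bigA_distr_bigA (fun (_ : 'I_tau) (j : 'I_n) => pi j)) /=.
by rewrite big1 ?mul1r // => t _.
Qed.

Lemma sampE_pair (h h' : 'I_n -> R) (s u : 'I_tau) :
  sampE pi (fun idx => h (idx s) * h' (idx u)) =
  if s == u then \sum_i pi i * h i * h' i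
  else (\sum_i pi i * h i) * (\sum_i pi i * h' i).
Proof.
(* Factor the summand coordinatewise and distribute the product over sums;
   coordinates other than s and u contribute a factor sum_i pi i = 1. *)
pose G t i := pi i * (if t == s then h i else 1) * (if t == u then h' i else 1).
have other t : t != s -> t != u -> \sum_i G t i = 1.
  move=> /negbTE ts /negbTE tu; rewrite -pi_sum1.
  by apply: eq_bigr => i _; rewrite /G ts tu !mulr1.
transitivity (\sum_(idx : {ffun 'I_tau -> 'I_n}) \prod_t G t (idx t)).
  apply: eq_bigr => idx _; rewrite /G !big_split /=.
  by rewrite -!big_mkcond /= !big_pred1_eq mulrA.
rewrite -bigA_distr_bigA /= (bigD1 s) //=.
have [esu|su] := eqVneq s u.
  rewrite [X in _ * X]big1 ?mulr1 => [|t ts]; last by apply: other; rewrite -?esu.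
  by apply: eq_bigr => i _; rewrite /G -esu eqxx.
rewrite (bigD1 u) 1?eq_sym //= [X in _ * (_ * X)]big1 ?mulr1 => [|t /andP[ts tu]];
  last exact: other.
congr (_ * _); apply: eq_bigr => i _; rewrite /G eqxx.
  by rewrite (negbTE su) mulr1.
by rewrite eq_sym (negbTE su) mulr1.
Qed.

Lemma sampE_one (h : 'I_n -> R) (s : 'I_tau) :
  sampE pi (fun idx => h (idx s)) = \sum_i pi i * h i.
Proof.
transitivity (sampE pi (fun idx => h (idx s) * (fun=> 1) (idx s))).
  by apply: sampE_ext => idx; rewrite mulr1.
by rewrite (sampE_pair h (fun=> 1) s s) eqxx; apply: eq_bigr => i _; rewrite mulr1.
Qed.

Lemma sampE_sq_sum (f : 'I_n -> R) :
  let mu := \sum_i pi i * f i in let V := \sum_i pi i * f i ^+ 2 in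
  sampE pi (fun idx : {ffun 'I_tau -> 'I_n} => (\sum_t f (idx t)) ^+ 2)
  = tau%:R * (V - mu ^+ 2) + (tau%:R * mu) ^+ 2.
Proof.
move=> mu V.
have pair_moment (s u : 'I_tau) :
    sampE pi (fun idx : {ffun 'I_tau -> 'I_n} => f (idx s) * f (idx u))
    = mu ^+ 2 + (s == u)%:R * (V - mu ^+ 2).
  rewrite (sampE_pair f f s u); case: eqP => _; last by rewrite mul0r addr0.
  by rewrite mul1r addrC subrK; apply: eq_bigr => i _; rewrite mulrA.
have row_moment (s : 'I_tau) :
    sampE pi (fun idx : {ffun 'I_tau -> 'I_n} => \sum_u f (idx s) * f (idx u))
    = mu ^+ 2 *+ tau + (V - mu ^+ 2).
  rewrite sampE_sum (eq_bigr _ (fun u _ => pair_moment s u)) big_split /=.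
  rewrite sumr_const card_ord (bigD1 s) //= eqxx mul1r big1 ?addr0 //.
  by move=> u us; rewrite eq_sym (negbTE us) mul0r.
rewrite (sampE_ext _ (fun idx => \sum_s \sum_u f (idx s) * f (idx u))); last first.
  by move=> idx; rewrite expr2 mulr_suml; apply: eq_bigr => s _; rewrite mulr_sumr.
rewrite sampE_sum (eq_bigr _ (fun s _ => row_moment s)) sumr_const card_ord.
by rewrite -[mu ^+ 2 *+ tau]mulr_natl -[(_ + _) *+ tau]mulr_natl; ring.
Qed.

Lemma sampE_mean_sq_error (f : 'I_n -> R) : (0 < tau)%N ->
  let mu := \sum_i pi i * f i in let V := \sum_i pi i * f i ^+ 2 in
  sampE pi (fun idx : {ffun 'I_tau -> 'I_n} =>
              (mu - tau%:R^-1 * \sum_t f (idx t)) ^+ 2)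
  = tau%:R^-1 * (V - mu ^+ 2).
Proof.
move=> tau_gt0 mu V; set c := tau%:R^-1.
rewrite (sampE_ext _ (fun idx => mu ^+ 2 + (- (2 * mu * c) * \sum_t f (idx t)
            + c ^+ 2 * (\sum_t f (idx t)) ^+ 2))); last by move=> idx; ring.
rewrite sampE_add sampE_const sampE_add !sampE_scale sampE_sum sampE_sq_sum.
under eq_bigr do rewrite sampE_one.
rewrite sumr_const card_ord -/mu -/V -[_ *+ tau]mulr_natl /c; field.
by rewrite pnatr_eq0 -lt0n.
Qed.

End SampleExpectation.

Section CircularIndex.
Context {l : nat}.

Lemma ord_subm_val (k j : 'I_l) :
  val (ord_subm k j) = if (j <= k)%N then (k - j)%N else (k + l - j)%N.
Proof.
rewrite /=; have := ltn_ord k; have := ltn_ord j; case: (leqP j k) => jk hj hk.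
  have -> : (k + l - j = (k - j) + l)%N by lia.
  by rewrite modnDr modn_small //; lia.
by rewrite modn_small //; lia.
Qed.

(* For fixed k, j |-> (k - j) mod l permutes the slice indices; this is
   why every block row of bcirc(A) contains all slices of A exactly once. *)
Lemma ord_subm_inj (k : 'I_l) : injective (ord_subm k).
Proof.
move=> j j' /(congr1 val); rewrite !ord_subm_val => e; apply/val_inj => /=.
have := ltn_ord k; have := ltn_ord j; have := ltn_ord j'; move: e.
by case: (leqP j k); case: (leqP j' k); lia.
Qed.

End CircularIndex.

Section FirstSliceIndex.
Context {l : nat}.

Lemma ord_subm0 (k : 'I_l.+1) : ord_subm k ord0 = k.
Proof. by apply/val_inj; rewrite ord_subm_val /= subn0. Qed.

Lemma ord_subm_eq0 (k j : 'I_l.+1) : (ord_subm k j == ord0) = (j == k).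
Proof.
apply/eqP/eqP => [e|->]; apply/val_inj; last by rewrite ord_subm_val leqnn subnn.
move: e => /(congr1 val); rewrite ord_subm_val /=.
by have := ltn_ord k; have := ltn_ord j; case: (leqP j k); lia.
Qed.

Lemma ord_negm_eq0 (k : 'I_l.+1) : (ord_negm k == ord0) = (k == ord0).
Proof.
apply/eqP/eqP => [/(congr1 val) /= e|->]; apply/val_inj => /=; last first.
  by rewrite subn0 modnn.
have := ltn_ord k; move: e; case: (posnP k) => // k_gt0.
by rewrite modn_small; lia.
Qed.

End FirstSliceIndex.

Section FlatTubes.
Context {R : realType} {l : nat}.

Definition flat {m n : nat} (A : tubal R l.+1 m n) : Prop :=
  forall j, j != ord0 -> A j = 0.

Lemma tprod_flat_r m n p (A : tubal R l.+1 m n) (B : tubal R l.+1 n p) k :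
  flat B -> tprod A B k = A k *m B ord0.
Proof.
move=> flatB; rewrite /tprod (bigD1 ord0) //= ord_subm0.
by rewrite big1 ?addr0 // => j /flatB->; exact: mulmx0.
Qed.

Lemma tprod_flat_l m n p (A : tubal R l.+1 m n) (B : tubal R l.+1 n p) k :
  flat A -> tprod A B k = A ord0 *m B k.
Proof.
move=> flatA; rewrite /tprod (bigD1 k) //= big1 ?addr0.
  by congr (A _ *m _); apply/eqP; rewrite ord_subm_eq0.
by move=> j jk; rewrite flatA ?mul0mx // ord_subm_eq0.
Qed.

End FlatTubes.

Section SamplingMatrices.
Context {R : realType} {l n tau : nat} (pi : 'I_n -> R).
Context (idx : {ffun 'I_tau -> 'I_n}).

Definition sample_mx : 'M[R]_(n, tau) :=
  \matrix_(i, t) (if i == idx t then 1 else 0).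

Definition rescale (t : 'I_tau) : R := (Num.sqrt (tau%:R * pi (idx t)))^-1.

Definition rescale_mx : 'M[R]_tau :=
  \matrix_(s, t) (if s == t then rescale t else 0).

Lemma sampS_slice k :
  sampS (R:=R) (l:=l.+1) idx k = if k == ord0 then sample_mx else 0.
Proof.
apply/matrixP => i t; rewrite /sampS /is_first !mxE.
case: (k =P ord0) => [->|/eqP k0]; rewrite ?mxE //.
by rewrite -[_ == 0%N]/(k == ord0) (negbTE k0).
Qed.

Lemma sampD_slice k :
  sampD (l:=l.+1) pi idx k = if k == ord0 then rescale_mx else 0.
Proof.
apply/matrixP => s t; rewrite /sampD /is_first !mxE.
case: (k =P ord0) => [->|/eqP k0]; rewrite ?mxE //.
by rewrite -[_ == 0%N]/(k == ord0) (negbTE k0).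
Qed.

Lemma ttr_sampS_slice k :
  ttr (sampS (R:=R) (l:=l.+1) idx) k = if k == ord0 then sample_mx^T else 0.
Proof. by rewrite /ttr sampS_slice ord_negm_eq0; case: ifP => // _; exact: trmx0. Qed.

Lemma flat_sampS : flat (sampS (R:=R) (l:=l.+1) idx).
Proof. by move=> k /negbTE k0; rewrite sampS_slice k0. Qed.

Lemma flat_sampD : flat (sampD (l:=l.+1) pi idx).
Proof. by move=> k /negbTE k0; rewrite sampD_slice k0. Qed.

Lemma flat_ttr_sampS : flat (ttr (sampS (R:=R) (l:=l.+1) idx)).
Proof. by move=> k /negbTE k0; rewrite ttr_sampS_slice k0. Qed.

Lemma mul_sample_mx m (A : 'M[R]_(m, n)) r t :
  (A *m sample_mx) r t = A r (idx t).
Proof.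
rewrite mxE (bigD1 (idx t)) //= mxE eqxx mulr1 big1 ?addr0 // => i /negbTE ni.
by rewrite mxE ni mulr0.
Qed.

Lemma mul_tr_sample_mx p (B : 'M[R]_(n, p)) t c :
  (sample_mx^T *m B) t c = B (idx t) c.
Proof.
rewrite mxE (bigD1 (idx t)) //= !mxE eqxx mul1r big1 ?addr0 // => i /negbTE ni.
by rewrite !mxE ni mul0r.
Qed.

Lemma mul_rescale_mx m (A : 'M[R]_(m, tau)) r t :
  (A *m rescale_mx) r t = A r t * rescale t.
Proof.
rewrite mxE (bigD1 t) //= mxE eqxx big1 ?addr0 // => s /negbTE st.
by rewrite mxE st mulr0.
Qed.

Hypothesis pi_pos : forall i, 0 < pi i.

Lemma rescale_sq t : rescale t * rescale t = (tau%:R * pi (idx t))^-1.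
Proof. by rewrite -invfM -expr2 sqr_sqrtr // mulr_ge0 // ltW. Qed.

Lemma sampled_mx_entry m p (A : 'M[R]_(m, n)) (B : 'M[R]_(n, p)) r c :
  (A *m sample_mx *m rescale_mx *m rescale_mx *m (sample_mx^T *m B)) r c
  = \sum_t A r (idx t) * B (idx t) c / (tau%:R * pi (idx t)).
Proof.
rewrite mxE; apply: eq_bigr => t _.
rewrite !mul_rescale_mx mul_sample_mx mul_tr_sample_mx.
by rewrite -[A r _ * _ * _]mulrA rescale_sq mulrAC.
Qed.

End SamplingMatrices.

Section SliceProducts.
Context {R : realType} {l m n p : nat}.

Definition slice_prod (X : tubal R l m n) (Y : tubal R l n p) (i : 'I_n) :
  tubal R l m p := tprod (lat_slice X i) (hor_slice Y i).

Lemma slice_prod_entry (X : tubal R l m n) (Y : tubal R l n p) i k r c :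
  slice_prod X Y i k r c = \sum_j X (ord_subm k j) r i * Y j i c.
Proof.
rewrite /slice_prod /tprod summxE.
by apply: eq_bigr => j _; rewrite mxE big_ord1 !mxE.
Qed.

Lemma tprod_slice_expansion (X : tubal R l m n) (Y : tubal R l n p) k r c :
  tprod X Y k r c = \sum_i slice_prod X Y i k r c.
Proof.
rewrite /tprod summxE; under eq_bigr do rewrite mxE.
by rewrite exchange_big; apply: eq_bigr => i _; rewrite slice_prod_entry.
Qed.

End SliceProducts.

Section Frobenius.
Context {R : realType}.

(* Cauchy-Schwarz for finite sums, from Lagrange's identity
   sum_(i,j) (a_i b_j - a_j b_i)^2 >= 0. *)
Lemma cauchy_schwarz (I : finType) (a b : I -> R) :
  (\sum_i a i * b i) ^+ 2 <= (\sum_i a i ^+ 2) * (\sum_i b i ^+ 2).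
Proof.
have sq_sum (F : I -> R) (G : I -> R) :
    (\sum_i F i) * (\sum_j G j) = \sum_i \sum_j F i * G j.
  by rewrite mulr_suml; apply: eq_bigr => i _; rewrite mulr_sumr.
rewrite -(ler_pM2l (_ : 0 < 2)) // expr2 sq_sum.
have -> : 2 * ((\sum_i a i ^+ 2) * (\sum_i b i ^+ 2)) =
    \sum_i \sum_j a i ^+ 2 * b j ^+ 2 + \sum_i \sum_j b i ^+ 2 * a j ^+ 2.
  by rewrite -!sq_sum [X in _ = _ + X]mulrC mulr2n mulrDl mul1r.
rewrite mulr_sumr -big_split /=; apply: ler_sum => i _.
rewrite mulr_sumr -big_split /=; apply: ler_sum => j _.
have := sqr_ge0 (a i * b j - a j * b i); nra.
Qed.

Lemma frob2_ge0 l m n (A : tubal R l m n) : 0 <= frob2 A.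
Proof. by do 3!(apply: sumr_ge0 => ? _); exact: sqr_ge0. Qed.

Lemma frob2_scale l m n (x : R) (A : tubal R l m n) :
  x * frob2 A = \sum_k \sum_r \sum_c x * A k r c ^+ 2.
Proof.
rewrite /frob2 mulr_sumr; apply: eq_bigr => k _.
by rewrite mulr_sumr; apply: eq_bigr => r _; rewrite mulr_sumr.
Qed.

(* The Frobenius norm is submultiplicative for the t-product up to the
   factor l: each of the l block rows of bcirc(A) has squared norm ||A||^2. *)
Lemma frob2_tprod_le l m n p (A : tubal R l m n) (B : tubal R l n p) :
  frob2 (tprod A B) <= l%:R * frob2 A * frob2 B.
Proof.
pose a k r := \sum_j \sum_q A (ord_subm k j) r q ^+ 2.
pose b c := \sum_j \sum_q B j q c ^+ 2.
have block_row k : \sum_r a k r = frob2 A.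
  rewrite /frob2 (reindex_inj (ord_subm_inj k)) /= exchange_big.
  by apply: eq_bigr => j _; rewrite exchange_big.
have unfolded : \sum_c b c = frob2 B.
  by rewrite /frob2 exchange_big; apply: eq_bigr => j _; rewrite exchange_big.
have -> : l%:R * frob2 A * frob2 B = \sum_(k < l) frob2 A * frob2 B.
  by rewrite sumr_const card_ord -mulrA mulr_natl.
apply: ler_sum => k _.
rewrite -(block_row k) -unfolded mulr_suml; apply: ler_sum => r _.
rewrite mulr_sumr; apply: ler_sum => c _.
rewrite summxE; under eq_bigr do rewrite mxE.
by rewrite /a /b !pair_big /=; exact: cauchy_schwarz.
Qed.

Lemma frob2_lat_slices l m n (X : tubal R l m n) :
  frob2 X = \sum_i frob2 (lat_slice X i).
Proof.
rewrite exchange_big; apply: eq_bigr => k _; rewrite exchange_big.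
by apply: eq_bigr => r _; apply: eq_bigr => i _; rewrite big_ord1 mxE.
Qed.

Lemma frob2_hor_slices l n p (Y : tubal R l n p) :
  frob2 Y = \sum_i frob2 (hor_slice Y i).
Proof.
rewrite exchange_big; apply: eq_bigr => k _; apply: eq_bigr => i _.
by rewrite big_ord1; apply: eq_bigr => c _; rewrite mxE.
Qed.

End Frobenius.

Section ImportanceWeights.
Context {R : realType} {n : nat} (pi : 'I_n -> R) (beta : R).
Hypotheses (pi_pos : forall i, 0 < pi i) (beta_pos : 0 < beta).

(* If pi_i >= beta a_i / sum a, every ratio a_i / pi_i is at most
   (sum a) / beta. *)
Lemma importance_sum_bound (a b : 'I_n -> R) :
  (forall i, 0 <= a i) -> (forall i, 0 <= b i) ->
  (forall i, beta * a i / (\sum_j a j) <= pi i) ->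
  \sum_i a i * b i / pi i <= (\sum_i a i) * (\sum_i b i) / beta.
Proof.
move=> a_ge0 b_ge0 dom; set A := \sum_j a j.
rewrite mulr_sumr mulr_suml; apply: ler_sum => i _.
have [->|ai_neq0] := eqVneq (a i) 0.
  by rewrite !mul0r divr_ge0 ?mulr_ge0 ?sumr_ge0 // ltW.
have ai_gt0 : 0 < a i by rewrite lt0r ai_neq0 a_ge0.
have A_gt0 : 0 < A.
  by apply: lt_le_trans ai_gt0 _; rewrite /A (bigD1 i) //= lerDl sumr_ge0.
have := dom i; rewrite -/A ler_pdivrMr // => dom_i.
rewrite ler_pdivrMr // mulrAC ler_pdivlMr //.
have := b_ge0 i; nra.
Qed.

(* Both sampling hypotheses of the theorem give the same bound; the first
   reduces to the second with weights sqrt(a_i b_i), by Cauchy-Schwarz. *)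
Lemma sampling_weight_bound (a b : 'I_n -> R) :
  (forall i, 0 <= a i) -> (forall i, 0 <= b i) ->
  (forall i, beta * (Num.sqrt (a i) * Num.sqrt (b i))
               / (\sum_j Num.sqrt (a j) * Num.sqrt (b j)) <= pi i)
  \/ (forall i, beta * a i / (\sum_j a j) <= pi i) ->
  \sum_i a i * b i / pi i <= (\sum_i a i) * (\sum_i b i) / beta.
Proof.
move=> a_ge0 b_ge0 [dom|]; last exact: importance_sum_bound.
pose w i := Num.sqrt (a i) * Num.sqrt (b i).
have w_ge0 i : 0 <= w i by rewrite mulr_ge0 ?sqrtr_ge0.
have sqrK (F : 'I_n -> R) :
    (forall i, 0 <= F i) -> \sum_i Num.sqrt (F i) ^+ 2 = \sum_i F i.
  by move=> F_ge0; apply: eq_bigr => i _; rewrite sqr_sqrtr.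
under eq_bigr do rewrite -[a _](sqr_sqrtr (a_ge0 _)) -[b _](sqr_sqrtr (b_ge0 _))
                        -exprMn -/(w _) expr2.
apply: le_trans (importance_sum_bound w w w_ge0 w_ge0 dom) _.
rewrite ler_pM2r ?invr_gt0 // -expr2 -(sqrK a) // -(sqrK b) //.
exact: cauchy_schwarz.
Qed.

End ImportanceWeights.

Section ExpectedError.
Context {R : realType} {l m n p tau : nat} (pi : 'I_n -> R).
Hypotheses (tau_gt0 : (0 < tau)%N) (pi_pos : forall i, 0 < pi i)
           (pi_sum1 : \sum_(i < n) pi i = 1).

Lemma sketch_entry (idx : {ffun 'I_tau -> 'I_n})
    (X : tubal R l.+1 m n) (Y : tubal R l.+1 n p) k r c :
  tprod (tprod (tprod (tprod X (sampS (R:=R) (l:=l.+1) idx)) (sampD (l:=l.+1) pi idx))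
               (sampD (l:=l.+1) pi idx))
        (tprod (ttr (sampS (R:=R) (l:=l.+1) idx)) Y) k r c
  = tau%:R^-1 * \sum_t slice_prod X Y (idx t) k r c / pi (idx t).
Proof.
have left j :
    tprod (tprod (tprod X (sampS (R:=R) (l:=l.+1) idx)) (sampD (l:=l.+1) pi idx))
          (sampD (l:=l.+1) pi idx) j
    = X j *m sample_mx idx *m rescale_mx pi idx *m rescale_mx pi idx.
  by rewrite !tprod_flat_r ?sampD_slice ?sampS_slice //;
    by [exact: flat_sampS | exact: flat_sampD].
have right j :
    tprod (ttr (sampS (R:=R) (l:=l.+1) idx)) Y j = (sample_mx idx)^T *m Y j.
  by rewrite tprod_flat_l ?ttr_sampS_slice //; exact: flat_ttr_sampS.
rewrite {1}/tprod summxE; under eq_bigr do rewrite left right sampled_mx_entry //.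
rewrite exchange_big mulr_sumr; apply: eq_bigr => t _.
rewrite slice_prod_entry !mulr_suml mulr_sumr; apply: eq_bigr => j _.
by rewrite invfM; ring.
Qed.

Lemma expected_error_bound (X : tubal R l.+1 m n) (Y : tubal R l.+1 n p) :
  sampE pi (fun idx : {ffun 'I_tau -> 'I_n} =>
    frob2 (tsub (tprod X Y)
      (tprod (tprod (tprod (tprod X (sampS (R:=R) (l:=l.+1) idx))
                                 (sampD (l:=l.+1) pi idx))
                           (sampD (l:=l.+1) pi idx))
             (tprod (ttr (sampS (R:=R) (l:=l.+1) idx)) Y))))
  <= \sum_i (tau%:R * pi i)^-1 * frob2 (slice_prod X Y i).
Proof.
pose s i k r c := slice_prod X Y i k r c.
pose g k r c i := s i k r c / pi i.
have pi_neq0 i : pi i != 0 by rewrite lt0r_neq0.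
(* Entrywise, the error is the deviation of the sample mean of g. *)
rewrite (sampE_ext pi _ (fun idx => \sum_k \sum_r \sum_c
          (\sum_i pi i * g k r c i - tau%:R^-1 * \sum_t g k r c (idx t)) ^+ 2)); last first.
  move=> idx; do 3!(apply: eq_bigr => ? _); congr (_ ^+ 2).
  rewrite !mxE tprod_slice_expansion sketch_entry //; congr (_ - _).
  by apply: eq_bigr => i _; rewrite /g mulrC divfK.
(* Its mean square is at most the second moment of g over tau. *)
have entry_bound k r c :
    sampE pi (fun idx : {ffun 'I_tau -> 'I_n} =>
      (\sum_i pi i * g k r c i - tau%:R^-1 * \sum_t g k r c (idx t)) ^+ 2)
    <= \sum_i (tau%:R * pi i)^-1 * s i k r c ^+ 2.
  have second_moment : tau%:R^-1 * \sum_i pi i * g k r c i ^+ 2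
                       = \sum_i (tau%:R * pi i)^-1 * s i k r c ^+ 2.
    rewrite mulr_sumr; apply: eq_bigr => i _; rewrite /g.
    by field; rewrite pi_neq0 pnatr_eq0 -lt0n tau_gt0.
  rewrite sampE_mean_sq_error // -second_moment.
  by rewrite ler_wpM2l ?invr_ge0 ?ler0n // lerBlDr lerDl sqr_ge0.
apply: le_trans (_ : \sum_k \sum_r \sum_c \sum_i
                       (tau%:R * pi i)^-1 * s i k r c ^+ 2 <= _).
  rewrite sampE_sum; apply: ler_sum => k _; rewrite sampE_sum; apply: ler_sum => r _.
  by rewrite sampE_sum; apply: ler_sum => c _; exact: entry_bound.
under [X in _ <= X]eq_bigr do rewrite frob2_scale.
rewrite [X in _ <= X]exchange_big; apply: ler_sum => k _.
rewrite [X in _ <= X]exchange_big; apply: ler_sum => r _.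
by rewrite [X in _ <= X]exchange_big.
Qed.

End ExpectedError.

Theorem mainTheorem1 (R : realType) (l m n p tau : nat)
  (X : tubal R l m n) (Y : tubal R l n p) (pi : 'I_n -> R) (beta : R) :
  (1 <= tau)%N ->
  (forall i, 0 < pi i) -> \sum_(i < n) pi i = 1 ->
  0 < beta -> beta <= 1 ->
  ((forall i : 'I_n,
      beta * (frob (lat_slice X i) * frob (hor_slice Y i))
        / (\sum_(j < n) frob (lat_slice X j) * frob (hor_slice Y j)) <= pi i)
   \/
   (forall i : 'I_n, beta * frob2 (lat_slice X i) / frob2 X <= pi i)) ->
  sampE pi (fun idx : {ffun 'I_tau -> 'I_n} =>
    frob2 (tsub (tprod X Y)
      (tprod (tprod (tprod (tprod X (sampS (R:=R) (l:=l) idx)) (sampD (l:=l) pi idx))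
                    (sampD (l:=l) pi idx)) (tprod (ttr (sampS (R:=R) (l:=l) idx)) Y))))
  <= l%:R / (beta * tau%:R) * frob2 X * frob2 Y.
Proof.
move=> tau_gt0 pi_pos pi_sum1 beta_gt0 _ dominates.
(* With no frontal slices both sides vanish. *)
case: l X Y dominates => [|l] X Y dominates.
  by rewrite /sampE big1 ?mul0r // => idx _; rewrite /frob2 big_ord0 mulr0.
pose a i := frob2 (lat_slice X i); pose b i := frob2 (hor_slice Y i).
have weights : \sum_i a i * b i / pi i <= frob2 X * frob2 Y / beta.
  rewrite frob2_lat_slices frob2_hor_slices.
  apply: sampling_weight_bound => // [i|i|]; try exact: frob2_ge0.
  by rewrite -frob2_lat_slices.
apply: le_trans (expected_error_bound pi tau_gt0 pi_pos pi_sum1 X Y) _.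
apply: le_trans (_ : \sum_i (tau%:R * pi i)^-1 * (l.+1%:R * a i * b i) <= _).
  apply: ler_sum => i _; rewrite ler_wpM2l ?frob2_tprod_le //.
  by rewrite invr_ge0 mulr_ge0 ?ler0n // ltW.
have tau_neq0 : tau%:R != 0 :> R by rewrite pnatr_eq0 -lt0n.
have -> : \sum_i (tau%:R * pi i)^-1 * (l.+1%:R * a i * b i)
          = l.+1%:R / tau%:R * \sum_i a i * b i / pi i.
  by rewrite mulr_sumr; apply: eq_bigr => i _; rewrite invfM; ring.
have -> : l.+1%:R / (beta * tau%:R) * frob2 X * frob2 Y
          = l.+1%:R / tau%:R * (frob2 X * frob2 Y / beta).
  by field; rewrite tau_neq0 lt0r_neq0.
by rewrite ler_wpM2l ?divr_ge0 ?ler0n.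
Qed.
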